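(* Let $R$ be a commutative ring with $1$ and let $H_1,\dots,H_m$ be hyperplanes in $R^n$, where $H_i$ is the zero set of $(\mathbf a^i,\mathbf x)-b_i=a^i_1x_1+\dots+a^i_nx_n-b_i$ with $a^i_j,b_i\in R$. Suppose every vertex of the unit cube $\{0,1\}^n\subseteq R^n$ other than $\mathbf 0$ lies in at least one $H_i$. If $\prod_{i=1}^m b_i\neq 0$, then $m\ge n$. *)

From mathcomp Require Import all_boot all_order all_algebra.
Set Implicit Arguments. Unset Strict Implicit. Unset Printing Implicit Defensive.
Import GRing.Theory.
Local Open Scope ring_scope.

Definition cube_vertex (R : pzRingType) (n : nat) (v : 'I_n -> bool) : 'rV[R]_n :=
  \row_j (v j)%:R.

Definition on_hyperplane (R : pzRingType) (n : nat) (a : 'rV[R]_n) (b : R)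
  (x : 'rV[R]_n) : Prop :=
  \sum_(j < n) a 0 j * x 0 j - b = 0.

From mathcomp Require Import all_boot all_order all_algebra.
Local Open Scope ring_scope.
Import GRing.Theory.

(* Assume m < n.  For f(x) = prod_i (b_i - (a^i, x)), the alternating sum
   sum_(S subset [n]) (-1)^|S| f(1_S) vanishes: expanding the product, every
   monomial involves at most m < n coordinates, and the alternating sum of the
   indicator of {S | T subset S} is zero for T a proper subset of [n].  But f
   vanishes at every nonzero vertex 1_S of the cube, so the sum equals
   f(0) = prod_i b_i, which is nonzero. *)

Section AlternatingSums.
Variable R : comNzRingType.
Variable I : finType.

Lemma sum_sign_supsets_eq0 (T : {set I}) : T != setT ->
  \sum_(S : {set I}) (-1) ^+ #|S| * ((T \subset S)%:R : R) = 0.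
Proof.
move=> T_proper.
have [j jNT] : exists j, j \notin T.
  by apply/existsP; move: T_proper; apply: contraR => /existsPn hT;
     apply/eqP/setP => x; rewrite inE; apply/negPn.
rewrite (bigID (fun S : {set I} => j \in S)) /=.
rewrite (reindex_onto (fun S => j |: S) (fun S => S :\ j)); last first.
  by move=> S jS; rewrite setD1K.
have pair_cond S : (j \in j |: S) && ((j |: S) :\ j == S) = (j \notin S).
  rewrite setU11 /=; have [jS | jNS] := boolP (j \in S).
  - by apply/negbTE/eqP => eS; move: jS; rewrite -eS setD11.
  - by rewrite setU1K // eqxx.
rewrite (eq_bigl _ _ pair_cond) -big_split /= big1 // => S jNS.
have -> : (T \subset j |: S) = (T \subset S).
  apply/idP/idP => sTS; apply/subsetP => x xT; last by rewrite !inE (subsetP sTS) ?orbT.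
  by move: (subsetP sTS x xT); rewrite !inE => /predU1P [eqxj|//];
     move: jNT; rewrite -eqxj xT.
by rewrite cardsU1 jNS exprS mulN1r mulNr addNr.
Qed.

Lemma sum_option (F : option I -> R) : \sum_o F o = F None + \sum_i F (Some i).
Proof.
rewrite (bigD1 None) //= (reindex_omap Some id) => [|[i|] //].
by congr (_ + _); apply: eq_bigl => i; rewrite eqxx.
Qed.

Variable J : finType.

(* A term of the expansion of prod_i (c0 i + sum_(j in S) c i j) picks, for
   each factor i, either the constant c0 i (None) or a summand c i j (Some j);
   it survives exactly when every picked j lies in S. *)
Definition some_codom (h : {ffun J -> option I}) : {set I} :=
  [set j | Some j \in codom h].

Lemma card_some_codom (h : {ffun J -> option I}) : (#|some_codom h| <= #|J|)%N.
Proof.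
rewrite -(card_imset _ (@Some_inj _)) -(size_codom h).
apply: leq_trans (card_size _); apply: subset_leq_card.
by apply/subsetP => _ /imsetP [j + ->]; rewrite inE.
Qed.

Lemma prod_indicator_some_codom (h : {ffun J -> option I}) (S : {set I}) :
  \prod_i ((oapp (fun j => j \in S) true (h i))%:R : R) = (some_codom h \subset S)%:R.
Proof.
have [sub | /subsetPn [j]] := boolP (some_codom h \subset S).
  apply: big1 => i _; case eh: (h i) => [j|] //=.
  by rewrite (subsetP sub) // inE -eh codom_f.
rewrite inE => /codomP [i eh] jNS.
by rewrite (bigD1 i) //= -eh /= (negbTE jNS) mul0r.
Qed.

Lemma prod_affine_expand (c0 : J -> R) (c : J -> I -> R) (S : {set I}) :
  \prod_i (c0 i + \sum_(j in S) c i j) =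
  \sum_(h : {ffun J -> option I})
     (\prod_i oapp (c i) (c0 i) (h i)) * (some_codom h \subset S)%:R.
Proof.
have factor_expand i : c0 i + \sum_(j in S) c i j =
    \sum_o oapp (c i) (c0 i) o * (oapp (fun j => j \in S) true o)%:R.
  rewrite sum_option /= mulr1 big_mkcond; congr (_ + _).
  by apply: eq_bigr => j _; case: (j \in S); rewrite ?mulr1 ?mulr0.
under eq_bigr do rewrite factor_expand.
rewrite bigA_distr_bigA; apply: eq_bigr => h _.
by rewrite big_split prod_indicator_some_codom.
Qed.

Lemma sum_sign_prod_affine_eq0 (c0 : J -> R) (c : J -> I -> R) :
  (#|J| < #|I|)%N ->
  \sum_(S : {set I}) (-1) ^+ #|S| * \prod_i (c0 i + \sum_(j in S) c i j) = 0.
Proof.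
move=> ltJI.
under eq_bigr => S _ do rewrite prod_affine_expand mulr_sumr.
rewrite exchange_big big1 // => h _.
under eq_bigr => S _ do rewrite mulrCA.
rewrite -mulr_sumr sum_sign_supsets_eq0 ?mulr0 //.
apply: contraTneq ltJI => codom_full.
by rewrite -leqNgt -cardsT -codom_full card_some_codom.
Qed.

End AlternatingSums.

Lemma on_hyperplane_cube_vertex (R : pzRingType) n (a : 'rV[R]_n) b (S : {set 'I_n}) :
  on_hyperplane a b (cube_vertex R (fun j => j \in S)) -> \sum_(j in S) a 0 j = b.
Proof.
rewrite /on_hyperplane /cube_vertex.
under eq_bigr do rewrite mxE.
have -> : \sum_(j < n) a 0 j * (j \in S)%:R = \sum_(j < n | j \in S) a 0 j.
  rewrite [RHS]big_mkcond; apply: eq_bigr => j _.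
  by case: (j \in S); rewrite ?mulr1 ?mulr0.
by move/eqP; rewrite subr_eq0 => /eqP.
Qed.

Theorem theorem6 (R : comNzRingType) (n m : nat)
  (a : 'I_m -> 'rV[R]_n) (b : 'I_m -> R)
  (cover : forall v : 'I_n -> bool, (exists j, v j) ->
     exists i : 'I_m, on_hyperplane (a i) (b i) (cube_vertex R v))
  (hb : \prod_(i < m) b i != 0) :
  (n <= m)%N.
Proof.
rewrite leqNgt; apply/negP => ltmn.
have := @sum_sign_prod_affine_eq0 R 'I_n 'I_m b (fun i j => - a i 0 j).
rewrite !card_ord => /(_ ltmn).
rewrite (bigD1 set0) //= [X in _ + X]big1 => [|S S_neq0].
  rewrite cards0 expr0 mul1r addr0.
  under eq_bigr do rewrite big_set0 addr0.
  by move/eqP; rewrite (negbTE hb).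
have [j jS] := set0Pn S S_neq0.
have [i /on_hyperplane_cube_vertex hi] := cover _ (ex_intro _ j jS).
by rewrite (bigD1 i) //= sumrN hi subrr mul0r mulr0.
Qed.
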